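(* For any odd prime $p$ and any non-negative integer $k$, \[ C^{(-k-1)}_{p-1}\equiv 1\pmod p. \]
   Context: For any integer $k$, let $\mathrm{Li}_k(t)=\sum_{n=1}^{\infty} t^n/n^k$. The poly-Bernoulli numbers of type $C$, $C^{(k)}_n$ ($n\ge0$), are defined by $\frac{\mathrm{Li}_k(1-e^{-t})}{e^{t}-1}=\sum_{n=0}^{\infty}C^{(k)}_n\frac{t^n}{n!}$. For negative upper index these are integers. *)

(* Formal power series over rat as coefficient sequences nat -> rat. *)
From mathcomp Require Import all_boot all_order all_algebra.
Set Implicit Arguments. Unset Strict Implicit. Unset Printing Implicit Defensive.
Import Order.TTheory GRing.Theory Num.Theory.
Local Open Scope ring_scope.

Definition smul (f g : nat -> rat) : nat -> rat :=
  fun j => \sum_(i < j.+1) f i * g (j - i)%N.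

Definition sone : nat -> rat := fun j => (j == 0%N)%:R.

Fixpoint spow (f : nat -> rat) (n : nat) : nat -> rat :=
  if n is n'.+1 then smul f (spow f n') else sone.

(* Coefficients of 1 - e^{-t} = sum_{j>=1} (-1)^(j+1) t^j / j! *)
Definition one_minus_emt : nat -> rat :=
  fun j => if j == 0%N then 0 else (-1) ^+ j.+1 / (j`!)%:R.

(* Coefficients of Li_{-m}(1 - e^{-t}) = sum_{n>=1} n^m (1 - e^{-t})^n.
   Since (1 - e^{-t})^n has order n, only n <= j contribute to t^j. *)
Definition Li_neg_comp (m : nat) : nat -> rat :=
  fun j => \sum_(1 <= n < j.+1) (n%:R) ^+ m * spow one_minus_emt n j.

(* Coefficients of (e^t - 1)/t = sum_{i>=0} t^i/(i+1)! *)
Definition expm1_div_t (i : nat) : rat := 1 / ((i.+1)`!)%:R.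

(* Ordinary coefficients c_0..c_n of Li_{-m}(1-e^{-t}) / (e^t - 1)
   = (Li_{-m}(1-e^{-t})/t) / ((e^t-1)/t), computed by series division:
   c_j = L_{j+1} - sum_{i=1..j} D_i c_{j-i}   (D_0 = 1). *)
Fixpoint polyBernC_coefs (m n : nat) : seq rat :=
  match n with
  | 0 => [:: Li_neg_comp m 1]
  | n'.+1 =>
      let s := polyBernC_coefs m n' in
      rcons s (Li_neg_comp m n'.+2 -
               \sum_(i < n'.+1) expm1_div_t i.+1 * nth 0 s (n' - i)%N)
  end.

(* Poly-Bernoulli numbers of type C with negative upper index -m:
   Li_{-m}(1-e^{-t})/(e^t-1) = sum_n C^{(-m)}_n t^n/n!. *)
Definition polyBernC_neg (m n : nat) : rat :=
  (n`!)%:R * nth 0 (polyBernC_coefs m n) n.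

(* With u = 1 - e^{-t} one has e^t - 1 = u / (1 - u), so the generating
   function Li_{-m}(u) / (e^t - 1) is the sum of (n+1)^m x (1 - x)^n at
   x = e^{-t}, and only the terms n < p reach t^{p-1}.  For an integer
   polynomial q, j! times the coefficient of t^j in q(e^{-t}) is the integer
   sum_i q_i (-i)^j.  Modulo p, Fermat gives (-i)^{p-1} = 1 for 0 < i < p, so
   the n-th term is congruent to (n+1)^m (1 - 1)^n for n < p - 1, while the
   last one carries the factor p^m.  Only n = 0 survives, contributing 1. *)
From mathcomp Require Import all_boot all_algebra finfield.
From mathcomp Require Import ring zify.
Set Implicit Arguments. Unset Strict Implicit. Unset Printing Implicit Defensive.
Import GRing.Theory Num.Theory.
Local Open Scope ring_scope.

Lemma natr_fact_neq0 (R : numDomainType) n : (n`!)%:R != 0 :> R.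
Proof. by rewrite pnatr_eq0 -lt0n fact_gt0. Qed.

Lemma eq_smull f1 f2 g j : f1 =1 f2 -> smul f1 g j = smul f2 g j.
Proof. by move=> eq_f; apply: eq_bigr => i _; rewrite eq_f. Qed.

Lemma eq_smulr f g1 g2 j : g1 =1 g2 -> smul f g1 j = smul f g2 j.
Proof. by move=> eq_g; apply: eq_bigr => i _; rewrite eq_g. Qed.

Lemma smulBl f g h j :
  smul (fun k => f k - g k) h j = smul f h j - smul g h j.
Proof. by rewrite /smul -sumrB; apply: eq_bigr => i _; rewrite mulrBl. Qed.

Lemma smul_sumr f N (c : nat -> rat) (h : nat -> nat -> rat) j :
  smul f (fun k => \sum_(n < N) c n * h n k) j =
  \sum_(n < N) c n * smul f (h n) j.
Proof.
rewrite /smul; under eq_bigr => i _ do rewrite mulr_sumr.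
rewrite exchange_big; apply: eq_bigr => n _.
by rewrite mulr_sumr; apply: eq_bigr => i _; rewrite mulrCA.
Qed.

Definition exp_series (a : rat) (j : nat) : rat := a ^+ j / (j`!)%:R.

Lemma smul_exp_series a b j :
  smul (exp_series a) (exp_series b) j = exp_series (a + b) j.
Proof.
rewrite /smul /exp_series addrC exprDn mulr_suml; apply: eq_bigr => -[i] /=.
rewrite ltnS => le_ij _.
have fact_j : (j`!)%:R = ('C(j, i))%:R * (i`!)%:R * ((j - i)`!)%:R :> rat.
  by rewrite -!natrM -mulnA bin_fact.
have bin_neq0 : ('C(j, i))%:R != 0 :> rat by rewrite pnatr_eq0 -lt0n bin_gt0.
rewrite fact_j -mulr_natr; field.
by rewrite bin_neq0 !natr_fact_neq0.
Qed.

(* The coefficients of e^{st} q(e^{-t}). *)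
Definition exp_poly_series (s : rat) (q : {poly int}) (j : nat) : rat :=
  \sum_(i < size q) (q`_i)%:~R * exp_series (s - i%:R) j.

Lemma exp_poly_series_widen s (q : {poly int}) j N : (size q <= N)%N ->
  exp_poly_series s q j = \sum_(i < N) (q`_i)%:~R * exp_series (s - i%:R) j.
Proof.
move=> le_qN; rewrite /exp_poly_series -(subnKC le_qN) big_split_ord /=.
by rewrite [X in _ = _ + X]big1 ?addr0 // => i _; rewrite nth_default ?mul0r ?leq_addr.
Qed.

Lemma smul_exp_poly_series a s (q : {poly int}) j :
  smul (exp_series a) (exp_poly_series s q) j = exp_poly_series (s + a) q j.
Proof.
rewrite (smul_sumr _ _ (fun i => (q`_i)%:~R) (fun i => exp_series (s - i%:R))).
apply: eq_bigr => i _.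
by rewrite smul_exp_series addrA [a + s]addrC.
Qed.

Lemma exp_poly_series_mulX s (q : {poly int}) j :
  exp_poly_series (s + 1) ('X * q) j = exp_poly_series s q j.
Proof.
rewrite (@exp_poly_series_widen _ _ _ (size q).+1); last first.
  by rewrite mulrC; have [->|nz_q] := eqVneq q 0; rewrite ?mul0r ?size_mulX.
rewrite big_ord_recl coefXM eqxx mul0r add0r; apply: eq_bigr => i _.
by rewrite coefXM /= /bump /= add0n -natr1 [_%:R + 1]addrC addrKA.
Qed.

Lemma exp_poly_seriesB s (q1 q2 : {poly int}) j :
  exp_poly_series s (q1 - q2) j = exp_poly_series s q1 j - exp_poly_series s q2 j.
Proof.
set N := maxn (size q1) (size q2).
have le_q12N : (size (q1 - q2)%R <= N)%N.
  by apply: (leq_trans (size_polyD _ _)); rewrite size_polyN.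
rewrite !(@exp_poly_series_widen _ _ _ N) ?leq_maxl ?leq_maxr // -sumrB.
by apply: eq_bigr => i _; rewrite coefB rmorphB mulrBl.
Qed.

Lemma exp_poly_series1 j : exp_poly_series 0 1 j = sone j.
Proof.
rewrite /exp_poly_series size_poly1 big_ord1 coef1 mul1r subrr /exp_series.
by case: j => [|j]; rewrite /sone /= ?divr1 // expr0n mul0r.
Qed.

Lemma one_minus_emtE j : one_minus_emt j = exp_series 0 j - exp_series (-1) j.
Proof.
rewrite /one_minus_emt /exp_series; case: j => [|j] /=; first by rewrite subrr.
by rewrite expr0n mul0r sub0r exprS mulN1r mulNr.
Qed.

Lemma smul_one_minus_emt (q : {poly int}) j :
  smul one_minus_emt (exp_poly_series 0 q) j = exp_poly_series 0 ((1 - 'X) * q) j.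
Proof.
rewrite (eq_smull _ _ one_minus_emtE) smulBl !smul_exp_poly_series add0r mulrBl mul1r.
by rewrite exp_poly_seriesB -(exp_poly_series_mulX (-1)) addNr.
Qed.

Lemma spow_one_minus_emt n j :
  spow one_minus_emt n j = exp_poly_series 0 ((1 - 'X) ^+ n) j.
Proof.
elim: n j => [|n IHn] j /=; first by rewrite expr0 exp_poly_series1.
by rewrite (eq_smulr _ _ IHn) smul_one_minus_emt exprS.
Qed.

Lemma spow_one_minus_emt_small n j : (j < n)%N -> spow one_minus_emt n j = 0.
Proof.
elim: n j => [|n IHn] j //= lt_jn; apply: big1 => -[[|i] lt_ij] _ /=.
  by rewrite mul0r.
by rewrite IHn ?mulr0 //; rewrite ltnS in lt_ij; lia.
Qed.

Definition expm1_series (j : nat) : rat := exp_series 1 j - exp_series 0 j.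

Lemma expm1_div_t_conv (h : nat -> rat) j :
  \sum_(i < j.+1) expm1_div_t i * h (j - i)%N = smul expm1_series h j.+1.
Proof.
rewrite /smul [RHS]big_ord_recl /expm1_series /exp_series /= subrr mul0r add0r.
by apply: eq_bigr => i _; rewrite /= subSS expr1n expr0n /= mul0r subr0.
Qed.

(* At x = e^{-t}, x (1 - x)^n is (1 - e^{-t})^(n+1) / (e^t - 1). *)
Definition polyBernC_term (n : nat) : {poly int} := 'X * (1 - 'X) ^+ n.

Lemma smul_expm1_polyBernC_term n j :
  smul expm1_series (exp_poly_series 0 (polyBernC_term n)) j =
  spow one_minus_emt n.+1 j.
Proof.
rewrite smulBl !smul_exp_poly_series addr0 -[X in exp_poly_series X]add0r.
rewrite exp_poly_series_mulX -exp_poly_seriesB -[X in X - _]mul1r -mulrBl.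
by rewrite -exprS spow_one_minus_emt.
Qed.

Definition polyBernC_coef (m j : nat) : rat := nth 0 (polyBernC_coefs m j) j.

Lemma size_polyBernC_coefs m n : size (polyBernC_coefs m n) = n.+1.
Proof. by elim: n => [|n IHn] //=; rewrite size_rcons IHn. Qed.

Lemma nth_polyBernC_coefs m n j :
  (j <= n)%N -> nth 0 (polyBernC_coefs m n) j = polyBernC_coef m j.
Proof.
elim: n => [|n IHn]; first by rewrite leqn0 => /eqP ->.
rewrite leq_eqVlt => /orP [/eqP -> //|lt_jn].
by rewrite /= nth_rcons size_polyBernC_coefs lt_jn IHn.
Qed.

Lemma polyBernC_coefS m j :
  polyBernC_coef m j.+1 = Li_neg_comp m j.+2 -
    \sum_(i < j.+1) expm1_div_t i.+1 * polyBernC_coef m (j - i)%N.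
Proof.
rewrite {1}/polyBernC_coef /= nth_rcons size_polyBernC_coefs ltnn eqxx.
by congr (_ - _); apply: eq_bigr => i _; rewrite nth_polyBernC_coefs ?leq_subr.
Qed.

Lemma expm1_div_t0 : expm1_div_t 0 = 1.
Proof. by rewrite /expm1_div_t divr1. Qed.

Lemma polyBernC_coef_unique m N (g : nat -> rat) :
  (forall j, (j <= N)%N ->
     \sum_(i < j.+1) expm1_div_t i * g (j - i)%N = Li_neg_comp m j.+1) ->
  forall j, (j <= N)%N -> polyBernC_coef m j = g j.
Proof.
move=> conv_g; elim/ltn_ind => -[|j] IHj le_jN.
  by have := conv_g 0%N le_jN; rewrite big_ord1 expm1_div_t0 mul1r.
rewrite polyBernC_coefS -conv_g // big_ord_recl expm1_div_t0 mul1r subn0.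
suff -> : \sum_(i < j.+1) expm1_div_t i.+1 * polyBernC_coef m (j - i)%N =
          \sum_(i < j.+1) expm1_div_t i.+1 * g (j - i)%N by rewrite addrK.
apply: eq_bigr => i _; rewrite IHj ?ltnS ?leq_subr //.
exact: leq_trans (leq_subr _ _) (ltnW le_jN).
Qed.

Definition polyBernC_series (m B j : nat) : rat :=
  \sum_(n < B) n.+1%:R ^+ m * exp_poly_series 0 (polyBernC_term n) j.

Lemma polyBernC_series_conv m B j : (j < B)%N ->
  \sum_(i < j.+1) expm1_div_t i * polyBernC_series m B (j - i)%N =
  Li_neg_comp m j.+1.
Proof.
move=> lt_jB; rewrite expm1_div_t_conv /polyBernC_series.
rewrite (smul_sumr _ _ (fun n => n.+1%:R ^+ m)
                       (fun n => exp_poly_series 0 (polyBernC_term n))).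
under eq_bigr => n _ do rewrite smul_expm1_polyBernC_term.
rewrite /Li_neg_comp big_add1 succnK big_mkord.
rewrite (big_ord_widen B (fun n => n.+1%:R ^+ m * spow one_minus_emt n.+1 j.+1) lt_jB).
rewrite [RHS]big_mkcond; apply: eq_bigr => n _; case: ltnP => // le_jn.
by rewrite spow_one_minus_emt_small ?mulr0.
Qed.

Definition exp_moment (q : {poly int}) (j : nat) : int :=
  \sum_(i < size q) q`_i * (- i%:Z) ^+ j.

Lemma exp_poly_series0_fact q j :
  (j`!)%:R * exp_poly_series 0 q j = (exp_moment q j)%:~R.
Proof.
rewrite /exp_poly_series /exp_moment mulr_sumr rmorph_sum; apply: eq_bigr => i _.
rewrite /exp_series mulrCA [_`!%:R * _]mulrC divfK ?natr_fact_neq0 //.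
by rewrite rmorphM rmorphXn rmorphN sub0r.
Qed.

Lemma polyBernC_negE m n : polyBernC_neg m n =
  (\sum_(i < n.+1) i.+1%:Z ^+ m * exp_moment (polyBernC_term i) n)%:~R.
Proof.
rewrite /polyBernC_neg -/(polyBernC_coef m n).
rewrite (@polyBernC_coef_unique m n (polyBernC_series m n.+1)) //; last first.
  by move=> j le_jn; apply: polyBernC_series_conv.
rewrite /polyBernC_series mulr_sumr rmorph_sum; apply: eq_bigr => i _.
by rewrite mulrCA exp_poly_series0_fact rmorphM rmorphXn.
Qed.

Lemma expf_card_pred (F : finFieldType) (x : F) : x != 0 -> x ^+ #|F|.-1 = 1.
Proof.
move=> nz_x; apply: (mulfI nz_x); rewrite -exprS prednK ?expf_card ?mulr1 //.
exact: ltnW (finNzRing_gt1 F).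
Qed.

Lemma exp_moment_Fp p (q : {poly int}) : prime p -> (size q <= p)%N ->
  (exp_moment q p.-1)%:~R = (q.[1] - q`_0)%:~R :> 'F_p.
Proof.
move=> p_pr; rewrite /exp_moment horner_coef.
case size_q: (size q) => [|s] le_sp.
  by rewrite !big_ord0 nth_default ?size_q // subrr.
have /negPf pred_p_neq0 : p.-1 != 0%N by rewrite -lt0n -subn1 subn_gt0 prime_gt1.
rewrite !big_ord_recl /= oppr0 expr0n pred_p_neq0 mulr0 add0r expr1n mulr1.
rewrite addrC addKr !rmorph_sum; apply: eq_bigr => i _.
rewrite /bump /= add1n expr1n mulr1 rmorphM rmorphXn rmorphN.
have nz_i : (- i.+1%:~R : 'F_p) != 0.
  rewrite oppr_eq0 -(dvdz_pcharf (pchar_Fp p_pr)) dvdzE gtnNdvd //.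
  exact: leq_ltn_trans (ltn_ord i) le_sp.
by have := expf_card_pred nz_i; rewrite card_Fp // => ->; rewrite mulr1.
Qed.

Lemma size_polyBernC_term n : (size (polyBernC_term n) <= n.+2)%N.
Proof.
apply: (leq_trans (size_polyMleq _ _)); rewrite size_polyX add2n ltnS.
apply: (leq_trans (size_poly_exp_leq _ _)).
by rewrite -opprB size_polyN -polyC1 size_XsubC mul1n.
Qed.

Lemma polyBernC_term_horner1 n : (polyBernC_term n).[1] = (n == 0%N)%:R.
Proof. by rewrite /polyBernC_term !hornerE subrr expr0n. Qed.

Lemma polyBernC_moment_Fp p m : prime p -> (0 < m)%N ->
  (\sum_(i < p) i.+1%:Z ^+ m * exp_moment (polyBernC_term i) p.-1)%:~R = 1
    :> 'F_p.
Proof.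
move=> p_pr m_gt0.
have term_Fp (i : 'I_p) :
    (i.+1%:Z ^+ m * exp_moment (polyBernC_term i) p.-1)%:~R
      = ((i : nat) == 0%N)%:R :> 'F_p.
  rewrite intrM; have := ltn_ord i; rewrite leq_eqVlt => /orP [/eqP eq_ip|lt_ip].
    have /eqP -> : (i.+1%:Z ^+ m)%:~R == 0 :> 'F_p.
      by rewrite -(dvdz_pcharf (pchar_Fp p_pr)) eq_ip dvdz_exp.
    have : (0 < i)%N by rewrite -ltnS eq_ip prime_gt1.
    by rewrite mul0r lt0n => /negPf ->.
  rewrite exp_moment_Fp ?(leq_trans (size_polyBernC_term i)) //.
  rewrite polyBernC_term_horner1 coefXM subr0.
  by case: (i : nat) => [|i']; rewrite ?rmorph1 ?expr1n ?mul1r ?mulr0.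
rewrite rmorph_sum (eq_bigr _ (fun i _ => term_Fp i)).
rewrite (bigD1 (Ordinal (prime_gt0 p_pr))) //= big1 ?addr0 // => i.
by rewrite -val_eqE => /negPf ->.
Qed.

Theorem theorem3p3 (p k : nat) (hp : prime p) (hodd : odd p) :
  exists z : int, polyBernC_neg k.+1 p.-1 = 1 + (p%:Z * z)%:~R.
Proof.
rewrite polyBernC_negE prednK ?prime_gt0 //.
set S := \sum_(i < p) _.
have /dvdzP [z S_eq] : (p%:Z %| S - 1)%Z.
  by rewrite (dvdz_pcharf (pchar_Fp hp)) rmorphB /= polyBernC_moment_Fp // subrr.
by exists z; rewrite -(subrK 1 S) S_eq mulrC addrC rmorphD rmorph1.
Qed.
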